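(* Assume the standing assumptions on $A,\Omega,R,K$ in the context and that there exists $\theta_0\in]-A,A[$ with $\min_{\theta\in]-A,A[}\lambda(\theta,0)=\lambda(\theta_0,0)<0$. For $\varepsilon\in]0,\varepsilon_0[$ let $n_\varepsilon$ be a positive bounded solution of (E) and $\rho_\varepsilon(x)=\int_{-A}^An_\varepsilon(x,\theta)d\theta$. Then $0\le\rho_\varepsilon\le C_R$ for all $\varepsilon<\varepsilon_0$. Moreover, for $p\in[1,+\infty]$ there exists $C>0$ such that $\|\rho_\varepsilon\|_{W^{2,p}(\Omega)}\le C$ for all $\varepsilon$ small enough.
   Context: Standing assumptions: $A>0$; $\Omega=\bigcup_{i=1}^m ]a_i,b_i[\subset\mathbb{R}$ with $a_1<b_1<\dots<a_m<b_m$; $R\in C^1(\overline\Omega\times[-A,A])$ with $\|R\|_{W^{1,\infty}(\Omega\times]-A,A[)}<C_R$ for a constant $C_R$; $K$ is a $C^1$ even function with $K>0$, $0<c_K<K<C_K$, $|K'|<C_K$. $L\phi(x)=\int_\Omega[\phi(x)-\phi(y)]K(x-y)dy$. $\lambda(\theta,\rho)$ is the principal eigenvalue of $\psi\mapsto-\psi''+L\psi-(R(\cdot,\theta)-\rho)\psi$ on $\Omega$ with Neumann boundary conditions. $\mu_\varepsilon$ is the principal eigenvalue of $\xi\mapsto-\partial_{xx}\xi-\varepsilon^2\partial_{\theta\theta}\xi+L\xi-R\xi$ on $\Omega\times]-A,A[$ with Neumann boundary conditions; $\varepsilon_0>0$ is such that $\mu_\varepsilon<\lambda(\theta_0,0)/2$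 for $\varepsilon\in]0,\varepsilon_0[$. Problem (E): $-\varepsilon^2\partial_{\theta\theta}n_\varepsilon-\partial_{xx}n_\varepsilon+Ln_\varepsilon=n_\varepsilon(R-\rho_\varepsilon)$ in $\Omega\times]-A,A[$ ($L$ acting in $x$), $\partial_{\nu_x}n_\varepsilon=0$ on $\partial\Omega\times]-A,A[$, $\partial_{\nu_\theta}n_\varepsilon=0$ on $\Omega\times\{\pm A\}$. *)

From Stdlib Require Import Reals.
From Coquelicot Require Import Coquelicot.
Open Scope R_scope.

Fixpoint sumI (g : nat -> R) (m : nat) : R :=
  match m with O => 0 | S k => sumI g k + g k end.

Definition inOmega (m : nat) (a b : nat -> R) (x : R) : Prop :=
  exists i, (i < m)%nat /\ a i < x < b i.
Definition inOmegaBar (m : nat) (a b : nat -> R) (x : R) : Prop :=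
  exists i, (i < m)%nat /\ a i <= x <= b i.

Definition IntOmega (m : nat) (a b : nat -> R) (f : R -> R) : R :=
  sumI (fun i => RInt f (a i) (b i)) m.

Definition Lop (m : nat) (a b : nat -> R) (K : R -> R) (phi : R -> R) (x : R) : R :=
  IntOmega m a b (fun y => (phi x - phi y) * K (x - y)).

Definition dx (f : R -> R -> R) : R -> R -> R := fun x t => Derive (fun y => f y t) x.
Definition dt (f : R -> R -> R) : R -> R -> R := fun x t => Derive (fun s => f x s) t.

Definition cont2 (g : R -> R -> R) : Prop :=
  forall x t, continuous (fun p : R * R => g (fst p) (snd p)) (x, t).

Definition C1_1d (f : R -> R) : Prop :=
  (forall x, ex_derive f x) /\ (forall x, continuous (Derive f) x).

Definition C2_1d (f : R -> R) : Prop :=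
  (forall x, ex_derive f x) /\ (forall x, ex_derive (Derive f) x) /\
  (forall x, continuous (Derive_n f 2) x).

Definition C1_xt (f : R -> R -> R) : Prop :=
  cont2 f /\
  (forall x t, ex_derive (fun y => f y t) x /\ ex_derive (fun s => f x s) t) /\
  cont2 (dx f) /\ cont2 (dt f).

(* C^2 function of (x,theta) (on R^2), as far as the pure second partials go *)
Definition C2_xt (f : R -> R -> R) : Prop :=
  C1_xt f /\
  (forall x t, ex_derive (fun y => dx f y t) x /\ ex_derive (fun s => dt f x s) t) /\
  cont2 (dx (dx f)) /\ cont2 (dt (dt f)).

(* lambda(theta, rho) = lam : principal eigenvalue (eigenvalue with a positive
   eigenfunction) of psi |-> -psi'' + L psi - (R(.,theta) - rho) psi on Omega,
   Neumann boundary conditions *)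
Definition principal_eig1 (m : nat) (a b : nat -> R) (K : R -> R)
  (Rr : R -> R -> R) (theta rho lam : R) : Prop :=
  exists psi : R -> R,
    C2_1d psi /\
    (forall x, inOmega m a b x -> 0 < psi x) /\
    (forall i, (i < m)%nat -> Derive psi (a i) = 0 /\ Derive psi (b i) = 0) /\
    (forall x, inOmega m a b x ->
       - Derive_n psi 2 x + Lop m a b K psi x - (Rr x theta - rho) * psi x
       = lam * psi x).

Definition principal_eig2 (m : nat) (a b : nat -> R) (K : R -> R)
  (Rr : R -> R -> R) (A eps mu : R) : Prop :=
  exists xi : R -> R -> R,
    C2_xt xi /\
    (forall x t, inOmega m a b x -> -A < t < A -> 0 < xi x t) /\
    (forall i t, (i < m)%nat -> -A < t < A ->
        dx xi (a i) t = 0 /\ dx xi (b i) t = 0) /\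
    (forall x, inOmega m a b x -> dt xi x (-A) = 0 /\ dt xi x A = 0) /\
    (forall x t, inOmega m a b x -> -A < t < A ->
       - dx (dx xi) x t - eps ^ 2 * dt (dt xi) x t
       + Lop m a b K (fun y => xi y t) x - Rr x t * xi x t
       = mu * xi x t).

Definition rho_of (A : R) (n : R -> R -> R) : R -> R :=
  fun x => RInt (fun t => n x t) (-A) A.

Definition solE (m : nat) (a b : nat -> R) (K : R -> R)
  (Rr : R -> R -> R) (A eps : R) (n : R -> R -> R) : Prop :=
  C2_xt n /\
  (forall x t, inOmega m a b x -> -A < t < A -> 0 < n x t) /\
  (exists M, forall x t, inOmega m a b x -> -A < t < A -> Rabs (n x t) <= M) /\
  (forall i t, (i < m)%nat -> -A < t < A ->
      dx n (a i) t = 0 /\ dx n (b i) t = 0) /\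
  (forall x, inOmega m a b x -> dt n x (-A) = 0 /\ dt n x A = 0) /\
  (forall x t, inOmega m a b x -> -A < t < A ->
     - eps ^ 2 * dt (dt n) x t - dx (dx n) x t
     + Lop m a b K (fun y => n y t) x
     = n x t * (Rr x t - rho_of A n x)).

(* x^p for x >= 0, p > 0 (with 0^p = 0) *)
Definition powR0 (x p : R) : R := if Rlt_dec 0 x then Rpower x p else 0.

Definition W2p_norm (m : nat) (a b : nat -> R) (p : Rbar) (f : R -> R) : Rbar :=
  match p with
  | Finite q =>
      Finite (sumI (fun k => powR0
                 (IntOmega m a b (fun x => powR0 (Rabs (Derive_n f k x)) q)) (/ q)) 3)
  | p_infty =>
      Rbar_plus (Lub_Rbar (fun y => exists x, inOmega m a b x /\ y = Rabs (f x)))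
      (Rbar_plus (Lub_Rbar (fun y => exists x, inOmega m a b x /\ y = Rabs (Derive f x)))
                 (Lub_Rbar (fun y => exists x, inOmega m a b x /\ y = Rabs (Derive_n f 2 x))))
  | m_infty => p_infty
  end.

From Stdlib Require Import Reals Lra Lia Psatz.
From Coquelicot Require Import Coquelicot.
Open Scope R_scope.

(* Integrating the equation in [t] gives, for [rho = int n dt],
     - rho'' + L rho = int n R dt - rho ^ 2
   on the closure of Omega, with [rho' = 0] at the endpoints of every interval.
   At a maximum point of [rho] one has [rho' = 0], [rho'' <= 0] and [L rho >= 0],
   hence [rho ^ 2 <= int n R dt <= C_R rho] there, so [0 <= rho <= C_R].
   The equation then bounds [|rho''|] by [C_R C_K |Omega| + 2 C_R ^ 2], and the
   Neumann condition with the mean value theorem bounds [|rho'|] by [|Omega|] times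
   that. These pointwise bounds do not depend on [eps] and give the [W^{2,p}] bound
   for every [p]. *)

Definition continuous_2d (g : R -> R -> R) : Prop := forall x y, continuity_2d_pt g x y.

Lemma cont2_continuous_2d g : cont2 g -> continuous_2d g.
Proof. intros Hg x y. apply continuity_2d_pt_filterlim, Hg. Qed.

Lemma continuous_2d_slice_1 g x y : continuous_2d g -> continuous (fun s => g s y) x.
Proof.
  intros Hg. apply (continuous_comp_2 (fun s => s) (fun _ => y) g).
  - apply continuous_id.
  - apply continuous_const.
  - apply continuity_2d_pt_filterlim, Hg.
Qed.

Lemma continuous_2d_slice_2 g x y : continuous_2d g -> continuous (fun t => g x t) y.
Proof.
  intros Hg. apply (continuous_comp_2 (fun _ => x) (fun t => t) g).
  - apply continuous_const.
  - apply continuous_id.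
  - apply continuity_2d_pt_filterlim, Hg.
Qed.

Lemma continuous_2d_swap g : continuous_2d g -> continuous_2d (fun x y => g y x).
Proof.
  intros Hg x y. apply continuity_2d_pt_filterlim.
  apply (continuous_comp_2 (fun p : R * R => snd p) (fun p : R * R => fst p) g).
  - apply continuous_snd.
  - apply continuous_fst.
  - apply continuity_2d_pt_filterlim, Hg.
Qed.

Lemma ex_RInt_slice_2 g x c d : continuous_2d g -> ex_RInt (fun t => g x t) c d.
Proof.
  intros Hg. apply (ex_RInt_continuous (V := R_CompleteNormedModule)).
  intros t _. apply continuous_2d_slice_2, Hg.
Qed.

Lemma is_RInt_lin_comb (f g : R -> R) c d If Ig k l :
  is_RInt f c d If -> is_RInt g c d Ig ->
  is_RInt (fun t => k * f t + l * g t) c d (k * If + l * Ig).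
Proof.
  intros Hf Hg.
  exact (is_RInt_plus _ _ c d _ _ (is_RInt_scal _ c d k _ Hf) (is_RInt_scal _ c d l _ Hg)).
Qed.

Lemma abs_RInt_le_const_unordered (f : R -> R) c d M :
  ex_RInt f c d -> (forall t, Rmin c d <= t <= Rmax c d -> Rabs (f t) <= M) ->
  Rabs (RInt f c d) <= Rabs (d - c) * M.
Proof.
  intros Hf HM. destruct (Rle_dec c d) as [Hcd | Hcd].
  - rewrite (Rabs_right (d - c)) by lra. apply abs_RInt_le_const; auto.
    intros t Ht. apply HM. rewrite Rmin_left, Rmax_right; lra.
  - rewrite <- (opp_RInt_swap f d c) by (apply ex_RInt_swap; exact Hf).
    change (Rabs (- RInt f d c) <= Rabs (d - c) * M).
    rewrite Rabs_Ropp, (Rabs_left (d - c)), Ropp_minus_distr by lra.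
    apply abs_RInt_le_const; [lra | apply ex_RInt_swap; exact Hf |].
    intros t Ht. apply HM. rewrite Rmin_right, Rmax_left; lra.
Qed.

Lemma continuous_RInt_param g c d x0 :
  continuous_2d g -> continuous (fun x => RInt (fun t => g x t) c d) x0.
Proof.
  intros Hg. apply filterlim_locally. intros eps.
  set (eta := eps / (Rabs (d - c) + 1)).
  assert (Hpos : 0 < Rabs (d - c) + 1) by (pose proof (Rabs_pos (d - c)); lra).
  assert (Heta : 0 < eta) by (apply Rdiv_lt_0_compat; [apply cond_pos | exact Hpos]).
  destruct (uniform_continuity_2d_1d' g (Rmin c d) (Rmax c d) x0
              (fun t _ => Hg x0 t) (mkposreal _ Heta)) as [delta Hdelta].
  exists delta. intros x Hx. change (Rabs (x - x0) < delta) in Hx.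
  change (Rabs (RInt (fun t => g x t) c d - RInt (fun t => g x0 t) c d) < eps).
  replace (RInt (fun t => g x t) c d - RInt (fun t => g x0 t) c d)
    with (RInt (fun t => g x t - g x0 t) c d)
    by (apply (RInt_minus (V := R_CompleteNormedModule)); apply ex_RInt_slice_2; exact Hg).
  apply Rle_lt_trans with (Rabs (d - c) * eta).
  - apply abs_RInt_le_const_unordered.
    + apply (ex_RInt_minus (V := R_CompleteNormedModule)); apply ex_RInt_slice_2; exact Hg.
    + intros t Ht. left. apply (Hdelta t x0 t x); auto.
      * pose proof (cond_pos delta); lra.
      * apply Rabs_lt_between' in Hx; lra.
      * rewrite Rminus_eq_0, Rabs_R0. apply cond_pos.
  - unfold eta. apply Rmult_lt_reg_r with (Rabs (d - c) + 1); [exact Hpos |].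
    field_simplify; [| lra]. pose proof (cond_pos eps). nra.
Qed.

Lemma is_derive_RInt_param_2d f c d x :
  (forall x t, ex_derive (fun y => f y t) x) -> continuous_2d f -> continuous_2d (dx f) ->
  is_derive (fun x => RInt (fun t => f x t) c d) x (RInt (fun t => dx f x t) c d).
Proof.
  intros Hd Hf Hdf. apply (is_derive_RInt_param f c d x).
  - exists (mkposreal 1 Rlt_0_1). intros; apply Hd.
  - intros t _. apply Hdf.
  - exists (mkposreal 1 Rlt_0_1). intros; apply ex_RInt_slice_2, Hf.
Qed.

Lemma is_derive_RInt_upper (h : R -> R) c s :
  (forall t, continuous h t) -> is_derive (fun s => RInt h c s) s (h s).
Proof.
  intros Hh. apply (is_derive_RInt (V := R_CompleteNormedModule) h _ c s); [| apply Hh].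
  exists (mkposreal 1 Rlt_0_1). intros s' _.
  apply (RInt_correct (V := R_CompleteNormedModule)).
  apply (ex_RInt_continuous (V := R_CompleteNormedModule)). intros; apply Hh.
Qed.

(* Both sides, as functions of the upper bound [s] of the outer integral, vanish at
   [s = c] and have the same derivative. *)
Lemma RInt_Fubini g a b c d : continuous_2d g ->
  RInt (fun t => RInt (fun y => g y t) a b) c d = RInt (fun y => RInt (fun t => g y t) c d) a b.
Proof.
  intros Hg.
  set (F := fun s => RInt (fun t => RInt (fun y => g y t) a b) c s).
  set (G := fun s => RInt (fun y => RInt (fun t => g y t) c s) a b).
  assert (HF : forall s, is_derive F s (RInt (fun y => g y s) a b)).
  { intros s. apply (is_derive_RInt_upper (fun t => RInt (fun y => g y t) a b)).
    intros t. apply (continuous_RInt_param (fun t y => g y t)), continuous_2d_swap, Hg. }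
  assert (Hinner : forall y u, Derive (fun z => RInt (fun t => g y t) c z) u = g y u).
  { intros y u. apply is_derive_unique, (is_derive_RInt_upper (fun t => g y t)).
    intros t; apply continuous_2d_slice_2, Hg. }
  assert (HG : forall s, is_derive G s (RInt (fun y => g y s) a b)).
  { intros s.
    replace (RInt (fun y => g y s) a b)
      with (RInt (fun y => Derive (fun z => RInt (fun t => g y t) c z) s) a b)
      by (apply RInt_ext; intros; apply Hinner).
    apply (is_derive_RInt_param (fun z y => RInt (fun t => g y t) c z) a b s).
    - exists (mkposreal 1 Rlt_0_1). intros z _ y _. eexists.
      apply (is_derive_RInt_upper (fun t => g y t)). intros; apply continuous_2d_slice_2, Hg.
    - intros y _. apply continuity_2d_pt_ext with (f := fun u v => g v u).
      + intros; symmetry; apply Hinner.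
      + apply continuous_2d_swap, Hg.
    - exists (mkposreal 1 Rlt_0_1). intros z _.
      apply (ex_RInt_continuous (V := R_CompleteNormedModule)). intros.
      apply (continuous_RInt_param (fun y t => g y t)), Hg. }
  assert (Hdiff : forall s, is_derive (fun s => F s - G s) s 0).
  { intros s. rewrite <- (Rminus_diag (RInt (fun y => g y s) a b)).
    apply (is_derive_minus F G); auto. }
  destruct (MVT_gen (fun s => F s - G s) c d (fun _ => 0)) as [z [_ Hz]].
  - intros; apply Hdiff.
  - intros. apply continuity_pt_filterlim, (ex_derive_continuous (fun s => F s - G s)).
    eexists; apply Hdiff.
  - assert (Hc : F c - G c = 0).
    { unfold F, G. rewrite RInt_point, (RInt_ext _ (fun _ => 0)).
      - rewrite (RInt_const (V := R_CompleteNormedModule)). change (0 - (b - a) * 0 = 0). ring.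
      - intros; apply (RInt_point (V := R_CompleteNormedModule)). }
    change (F d = G d). lra.
Qed.

Lemma is_RInt_sumI (G : nat -> R -> R) (I : nat -> R) c d m :
  (forall i, (i < m)%nat -> is_RInt (G i) c d (I i)) ->
  is_RInt (fun t => sumI (fun i => G i t) m) c d (sumI I m).
Proof.
  induction m as [|m IH]; intros HG; simpl.
  - pose proof (is_RInt_const (V := R_NormedModule) c d 0) as H0.
    replace (scal (d - c) (0 : R_NormedModule)) with 0 in H0 by (symmetry; apply Rmult_0_r).
    exact H0.
  - apply is_RInt_ext with (f := fun t => 1 * sumI (fun i => G i t) m + 1 * G m t).
    + intros t _. rewrite !Rmult_1_l. reflexivity.
    + replace (sumI I m + I m) with (1 * sumI I m + 1 * I m) by ring.
      apply is_RInt_lin_comb; [apply IH; intros i Hi |]; apply HG; lia.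
Qed.

Lemma continuous_sumI (G : nat -> R -> R) m x :
  (forall i, (i < m)%nat -> continuous (G i) x) ->
  continuous (fun t => sumI (fun i => G i t) m) x.
Proof.
  induction m as [|m IH]; intros HG; simpl.
  - apply continuous_const.
  - apply (continuous_plus (fun t => sumI (fun i => G i t) m) (G m));
      [apply IH; intros i Hi |]; apply HG; lia.
Qed.

Lemma sumI_le (g h : nat -> R) m : (forall i, (i < m)%nat -> g i <= h i) -> sumI g m <= sumI h m.
Proof.
  induction m as [|m IH]; intros Hgh; simpl; [lra |].
  apply Rplus_le_compat; [apply IH; intros i Hi |]; apply Hgh; lia.
Qed.

Lemma sumI_nonneg (g : nat -> R) m : (forall i, (i < m)%nat -> 0 <= g i) -> 0 <= sumI g m.
Proof.
  induction m as [|m IH]; intros Hg; simpl; [lra |].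
  apply Rplus_le_le_0_compat; [apply IH; intros i Hi |]; apply Hg; lia.
Qed.

Lemma Rabs_sumI_le (g h : nat -> R) m : (forall i, (i < m)%nat -> Rabs (g i) <= h i) ->
  Rabs (sumI g m) <= sumI h m.
Proof.
  induction m as [|m IH]; intros Hgh; simpl; [rewrite Rabs_R0; lra |].
  eapply Rle_trans; [apply Rabs_triang |].
  apply Rplus_le_compat; [apply IH; intros i Hi |]; apply Hgh; lia.
Qed.

Lemma sumI_mult_r (g : nat -> R) m M : sumI (fun i => g i * M) m = sumI g m * M.
Proof. induction m as [|m IH]; simpl; [ring | rewrite IH; ring]. Qed.

Lemma sumI_term_le (g : nat -> R) m i : (forall j, (j < m)%nat -> 0 <= g j) -> (i < m)%nat ->
  g i <= sumI g m.
Proof.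
  induction m as [|m IH]; intros Hg Hi; simpl; [lia |].
  destruct (Nat.eq_dec i m) as [-> | Hne].
  - assert (0 <= sumI g m) by (apply sumI_nonneg; intros; apply Hg; lia). lra.
  - assert (g i <= sumI g m) by (apply IH; [intros; apply Hg | ]; lia).
    assert (0 <= g m) by (apply Hg; lia). lra.
Qed.

Lemma exists_interior_near a b x0 delta : a < b -> a <= x0 <= b -> 0 < delta ->
  exists y, a < y < b /\ y <> x0 /\ Rabs (y - x0) < delta.
Proof.
  intros Hab Hx Hdelta.
  assert (Hr : 0 < Rmin delta (b - a)) by (apply Rmin_pos; lra).
  pose proof (Rmin_l delta (b - a)). pose proof (Rmin_r delta (b - a)).
  set (r := Rmin delta (b - a) / 4) in *.
  destruct (Rlt_or_le x0 ((a + b) / 2)).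
  - exists (x0 + r). replace (x0 + r - x0) with r by ring.
    rewrite Rabs_right; unfold r in *; repeat split; lra.
  - exists (x0 - r). replace (x0 - r - x0) with (- r) by ring.
    rewrite Rabs_Ropp, Rabs_right; unfold r in *; repeat split; lra.
Qed.

Lemma continuous_nonneg_closed_interval (f : R -> R) a b x0 :
  a < b -> a <= x0 <= b -> continuous f x0 ->
  (forall x, a < x < b -> 0 <= f x) -> 0 <= f x0.
Proof.
  intros Hab Hx Hc Hf. apply Rnot_lt_le. intros Hneg.
  assert (Hpos : 0 < - f x0) by lra.
  destruct (proj1 (filterlim_locally f (f x0)) Hc (mkposreal _ Hpos)) as [delta Hdelta].
  destruct (exists_interior_near a b x0 delta Hab Hx (cond_pos delta)) as [y [Hy [_ Hyx]]].
  specialize (Hdelta y Hyx). change (Rabs (f y - f x0) < - f x0) in Hdelta.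
  apply Rabs_lt_between' in Hdelta. specialize (Hf y Hy). lra.
Qed.

Lemma is_derive_pos_sign (g : R -> R) (x0 l : R) : is_derive g x0 l -> 0 < l ->
  exists delta, 0 < delta /\
    forall y, y <> x0 -> Rabs (y - x0) < delta -> 0 < (g y - g x0) * (y - x0).
Proof.
  intros Hd Hl. apply is_derive_Reals in Hd.
  destruct (Hd l Hl) as [delta Hdelta].
  exists delta. split; [apply cond_pos |]. intros y Hy Hyx.
  assert (Hh : y - x0 <> 0) by lra.
  specialize (Hdelta (y - x0) Hh Hyx). replace (x0 + (y - x0)) with y in Hdelta by ring.
  apply Rabs_lt_between' in Hdelta.
  replace ((g y - g x0) * (y - x0)) with ((g y - g x0) / (y - x0) * ((y - x0) * (y - x0)))
    by (field; exact Hh).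
  apply Rmult_lt_0_compat; [lra |]. destruct (Rlt_or_le 0 (y - x0)); nra.
Qed.

Lemma Derive_eq_0_at_max (f : R -> R) a b x0 : a < x0 < b -> ex_derive f x0 ->
  (forall y, a < y < b -> f y <= f x0) -> Derive f x0 = 0.
Proof.
  intros Hx Hd Hmax. rewrite <- (Derive_Reals f x0 (ex_derive_Reals_0 f x0 Hd)).
  apply deriv_maximum with a b; try apply Hx. intros; apply Hmax; lra.
Qed.

(* At a critical point with [f'' > 0], the mean value theorem on [[x0, y]] gives
   [f y > f x0]. *)
Lemma Derive_2_nonpos_at_max (f : R -> R) a b x0 :
  a < b -> a <= x0 <= b -> (forall x, ex_derive f x) -> ex_derive (Derive f) x0 ->
  Derive f x0 = 0 -> (forall y, a <= y <= b -> f y <= f x0) -> Derive (Derive f) x0 <= 0.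
Proof.
  intros Hab Hx Hf Hf' Hcrit Hmax. apply Rnot_lt_le. intros Hpos.
  destruct (is_derive_pos_sign (Derive f) x0 _ (Derive_correct _ _ Hf') Hpos)
    as [delta [Hdelta Hsign]].
  rewrite Hcrit in Hsign.
  assert (Hmvt : forall u v, u < v ->
            exists c, f v - f u = Derive f c * (v - u) /\ u < c < v).
  { intros u v Huv. apply MVT_cor2; [exact Huv |].
    intros c _. apply is_derive_Reals, Derive_correct, Hf. }
  destruct (exists_interior_near a b x0 delta Hab Hx Hdelta) as [y [Hy [Hyx Hyd]]].
  assert (Hfy : f y <= f x0) by (apply Hmax; lra).
  destruct (Rlt_or_le x0 y) as [Hlt | Hle].
  - destruct (Hmvt x0 y Hlt) as [c [Hc Hcx]].
    assert (Hfc : 0 < (Derive f c - 0) * (c - x0)).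
    { apply Hsign; [lra |]. rewrite Rabs_right in Hyd |- *; lra. }
    nra.
  - destruct (Hmvt y x0 ltac:(lra)) as [c [Hc Hcx]].
    assert (Hfc : 0 < (Derive f c - 0) * (c - x0)).
    { apply Hsign; [lra |]. rewrite Rabs_left in Hyd |- *; lra. }
    nra.
Qed.

Lemma continuous_max_Omega_closure (f : R -> R) m a b :
  (1 <= m)%nat -> (forall i, (i < m)%nat -> a i < b i) -> (forall x, continuous f x) ->
  exists x0, inOmegaBar m a b x0 /\ forall y, inOmegaBar m a b y -> f y <= f x0.
Proof.
  intros Hm Hab Hf. induction m as [|m IH]; [lia |].
  destruct (continuity_ab_maj f (a m) (b m)) as [x1 [Hmax1 Hx1]].
  { left; apply Hab; lia. }
  { intros; apply continuity_pt_filterlim, Hf. }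
  destruct (Nat.eq_dec m 0) as [-> | Hm0].
  - exists x1. split; [exists 0%nat; split; [lia | exact Hx1] |].
    intros y [i [Hi Hy]]. replace i with 0%nat in Hy by lia. auto.
  - destruct IH as [x2 [Hx2 Hmax2]]; [lia | intros; apply Hab; lia |].
    destruct (Rle_or_lt (f x2) (f x1)).
    + exists x1. split; [exists m; split; [lia | exact Hx1] |].
      intros y [i [Hi Hy]]. destruct (Nat.eq_dec i m) as [-> | Hne]; [auto |].
      apply Rle_trans with (f x2); [apply Hmax2; exists i; split; [lia | exact Hy] | lra].
    + exists x2. split; [destruct Hx2 as [i [Hi Hy]]; exists i; split; [lia | exact Hy] |].
      intros y [i [Hi Hy]]. destruct (Nat.eq_dec i m) as [-> | Hne].
      * apply Rle_trans with (f x1); [auto | lra].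
      * apply Hmax2; exists i; split; [lia | exact Hy].
Qed.

Lemma powR0_nonneg x p : 0 <= powR0 x p.
Proof. unfold powR0. destruct (Rlt_dec 0 x); [left; apply exp_pos | lra]. Qed.

Lemma powR0_le x y p : 0 < p -> x <= y -> powR0 x p <= powR0 y p.
Proof.
  intros Hp Hxy. unfold powR0 at 1. destruct (Rlt_dec 0 x) as [Hx | Hx].
  - unfold powR0. destruct (Rlt_dec 0 y); [apply Rle_Rpower_l | ]; lra.
  - apply powR0_nonneg.
Qed.

(* At [0] the exponent [p >= 1] gives [0 <= powR0 y p <= y] for [0 < y <= 1]. *)
Lemma continuous_powR0 (p y0 : R) : 1 <= p -> continuous (fun y => powR0 y p) y0.
Proof.
  intros Hp. destruct (Rlt_or_le 0 y0) as [Hpos | Hnpos].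
  - apply continuous_ext_loc with (g := fun y => exp (p * ln y)).
    + exists (mkposreal y0 Hpos). intros y Hy. change (Rabs (y - y0) < y0) in Hy.
      apply Rabs_lt_between' in Hy. unfold powR0. destruct (Rlt_dec 0 y); [reflexivity | lra].
    + apply (ex_derive_continuous (K := R_AbsRing) (V := R_NormedModule)).
      auto_derive. exact Hpos.
  - destruct (Rle_lt_or_eq_dec _ _ Hnpos) as [Hneg | ->].
    + apply continuous_ext_loc with (g := fun _ => 0); [| apply continuous_const].
      assert (Hneg' : 0 < - y0) by lra. exists (mkposreal _ Hneg'). intros y Hy.
      change (Rabs (y - y0) < - y0) in Hy. apply Rabs_lt_between' in Hy.
      unfold powR0. destruct (Rlt_dec 0 y); [lra | reflexivity].
    + apply filterlim_locally. intros eps.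
      assert (He : 0 < Rmin 1 eps) by (apply Rmin_pos; [lra | apply cond_pos]).
      pose proof (Rmin_l 1 eps). pose proof (Rmin_r 1 eps).
      exists (mkposreal _ He). intros y Hy. change (Rabs (y - 0) < Rmin 1 eps) in Hy.
      change (Rabs (powR0 y p - powR0 0 p) < eps).
      rewrite Rminus_0_r in Hy. apply Rabs_lt_between in Hy.
      unfold powR0 at 2. destruct (Rlt_dec 0 0); [lra |]. rewrite Rminus_0_r.
      unfold powR0. destruct (Rlt_dec 0 y) as [Hy0 | Hy0]; [| rewrite Rabs_R0; apply cond_pos].
      rewrite Rabs_right by (left; apply exp_pos).
      apply Rle_lt_trans with y; [| lra].
      unfold Rpower. rewrite <- (exp_ln y) at 2 by exact Hy0.
      assert (ln y <= 0) by (rewrite <- ln_1; apply ln_le; lra).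
      destruct (Req_dec (p * ln y) (ln y)) as [-> | Hne]; [lra |].
      left. apply exp_increasing. nra.
Qed.

Lemma Lub_Rbar_le (E : R -> Prop) B : (forall y, E y -> y <= B) -> Rbar_le (Lub_Rbar E) B.
Proof. intros HB. apply (proj2 (Lub_Rbar_correct E)). intros y Hy. exact (HB y Hy). Qed.

Section Omega.

Variables (m : nat) (a b : nat -> R).
Hypothesis Hab : forall i, (i < m)%nat -> a i < b i.

Definition Omega_length : R := sumI (fun i => b i - a i) m.

Lemma inOmega_inOmegaBar x : inOmega m a b x -> inOmegaBar m a b x.
Proof. intros [i [Hi Hx]]. exists i. split; [exact Hi | lra]. Qed.

Lemma interval_length_le_Omega_length i : (i < m)%nat -> b i - a i <= Omega_length.
Proof.
  intros Hi. apply (sumI_term_le (fun i => b i - a i)); [| exact Hi].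
  intros j Hj. pose proof (Hab j Hj). lra.
Qed.

Lemma Omega_length_nonneg : 0 <= Omega_length.
Proof. apply sumI_nonneg. intros i Hi. pose proof (Hab i Hi). lra. Qed.

Lemma continuous_le_closure (f g : R -> R) x :
  inOmegaBar m a b x -> continuous f x -> continuous g x ->
  (forall y, inOmega m a b y -> f y <= g y) -> f x <= g x.
Proof.
  intros [i [Hi Hx]] Hf Hg Hfg. apply Rminus_le_0.
  apply (continuous_nonneg_closed_interval (fun y => g y - f y) (a i) (b i)); auto.
  - apply (continuous_minus g f); assumption.
  - intros y Hy. apply Rge_le, Rge_minus, Rle_ge, Hfg. exists i. split; assumption.
Qed.

Lemma IntOmega_le_const h M : (forall z, continuous h z) ->
  (forall x, inOmega m a b x -> h x <= M) -> IntOmega m a b h <= Omega_length * M.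
Proof.
  intros Hh HM. unfold IntOmega, Omega_length. rewrite <- sumI_mult_r. apply sumI_le.
  intros i Hi. pose proof (Hab i Hi).
  rewrite <- (RInt_const (V := R_CompleteNormedModule)). apply RInt_le; [lra | | |].
  - apply (ex_RInt_continuous (V := R_CompleteNormedModule)). intros; apply Hh.
  - apply (ex_RInt_const (V := R_CompleteNormedModule)).
  - intros x Hx. apply HM. exists i. split; assumption.
Qed.

Lemma W2p_norm_le p B : Rbar_le 1 p -> 0 <= B ->
  exists C, 0 < C /\ forall f,
    (forall k, (k < 3)%nat -> forall z, continuous (Derive_n f k) z) ->
    (forall k x, (k < 3)%nat -> inOmega m a b x -> Rabs (Derive_n f k x) <= B) ->
    Rbar_le (W2p_norm m a b p f) C.
Proof.
  intros Hp HB. destruct p as [q | |]; simpl in Hp; [| | contradiction].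
  - set (X := powR0 (Omega_length * powR0 B q) (/ q)).
    exists (3 * X + 1).
    split; [pose proof (powR0_nonneg (Omega_length * powR0 B q) (/ q)); unfold X; lra |].
    intros f Hc Hb.
    assert (Hk : forall k, (k < 3)%nat ->
      powR0 (IntOmega m a b (fun x => powR0 (Rabs (Derive_n f k x)) q)) (/ q) <= X).
    { intros k Hk. apply powR0_le; [apply Rinv_0_lt_compat; lra |].
      apply IntOmega_le_const.
      - intros z. apply (continuous_comp (fun x => Rabs (Derive_n f k x)) (fun y => powR0 y q)).
        + apply continuous_Rabs_comp, Hc, Hk.
        + apply continuous_powR0, Hp.
      - intros x Hx. apply powR0_le; [lra | apply Hb; assumption]. }
    pose proof (Hk 0%nat ltac:(lia)). pose proof (Hk 1%nat ltac:(lia)).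
    pose proof (Hk 2%nat ltac:(lia)). simpl in *. lra.
  - exists (3 * B + 1). split; [lra |]. intros f _ Hb.
    apply Rbar_le_trans with (Rbar_plus B (Rbar_plus B B)); [| simpl; lra].
    apply Rbar_plus_le_compat; [| apply Rbar_plus_le_compat];
      apply Lub_Rbar_le; intros y [x [Hx ->]].
    + exact (Hb 0%nat x ltac:(lia) Hx).
    + exact (Hb 1%nat x ltac:(lia) Hx).
    + exact (Hb 2%nat x ltac:(lia) Hx).
Qed.

End Omega.

Lemma RInt_lin_comb (f g : R -> R) c d k l : ex_RInt f c d -> ex_RInt g c d ->
  RInt (fun t => k * f t + l * g t) c d = k * RInt f c d + l * RInt g c d.
Proof.
  intros Hf Hg. apply is_RInt_unique, is_RInt_lin_comb;
    apply (RInt_correct (V := R_CompleteNormedModule)); assumption.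
Qed.

Lemma C1_xt_continuous_2d f : C1_xt f -> continuous_2d f.
Proof. intros [H _]. apply cont2_continuous_2d, H. Qed.

Lemma C1_xt_ex_derive_x f x t : C1_xt f -> ex_derive (fun y => f y t) x.
Proof. intros [_ [H _]]. exact (proj1 (H x t)). Qed.

Lemma C1_xt_continuous_2d_dx f : C1_xt f -> continuous_2d (dx f).
Proof. intros [_ [_ [H _]]]. apply cont2_continuous_2d, H. Qed.

Lemma C2_xt_ex_derive_dx f x t : C2_xt f -> ex_derive (fun y => dx f y t) x.
Proof. intros [_ [H _]]. exact (proj1 (H x t)). Qed.

Lemma C2_xt_ex_derive_dt f x t : C2_xt f -> ex_derive (fun s => dt f x s) t.
Proof. intros [_ [H _]]. exact (proj2 (H x t)). Qed.

Lemma C2_xt_continuous_2d_dxx f : C2_xt f -> continuous_2d (dx (dx f)).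
Proof. intros [_ [_ [H _]]]. apply cont2_continuous_2d, H. Qed.

Lemma C2_xt_continuous_2d_dtt f : C2_xt f -> continuous_2d (dt (dt f)).
Proof. intros [_ [_ [_ H]]]. apply cont2_continuous_2d, H. Qed.

Section Nonlocal.

Variables (m : nat) (a b : nat -> R) (K : R -> R).
Hypothesis Hab : forall i, (i < m)%nat -> a i < b i.
Hypothesis HK : forall z, continuous K z.

Lemma continuous_2d_Lop_integrand f : (forall z, continuous f z) ->
  continuous_2d (fun x y => (f x - f y) * K (x - y)).
Proof.
  intros Hf x y. apply continuity_2d_pt_mult.
  - apply continuity_2d_pt_minus.
    + apply (continuity_1d_2d_pt_comp f (fun u (_ : R) => u)); [| apply continuity_2d_pt_id1].
      apply continuity_pt_filterlim, Hf.
    + apply (continuity_1d_2d_pt_comp f (fun (_ : R) v => v)); [| apply continuity_2d_pt_id2].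
      apply continuity_pt_filterlim, Hf.
  - apply (continuity_1d_2d_pt_comp K (fun u v => u - v)); [apply continuity_pt_filterlim, HK |].
    apply continuity_2d_pt_minus; [apply continuity_2d_pt_id1 | apply continuity_2d_pt_id2].
Qed.

Lemma ex_RInt_Lop_integrand f x c d : (forall z, continuous f z) ->
  ex_RInt (fun y => (f x - f y) * K (x - y)) c d.
Proof.
  intros Hf. apply (ex_RInt_slice_2 (fun x y => (f x - f y) * K (x - y))).
  apply continuous_2d_Lop_integrand, Hf.
Qed.

Lemma continuous_Lop f x : (forall z, continuous f z) -> continuous (Lop m a b K f) x.
Proof.
  intros Hf.
  apply (continuous_sumI (fun i x => RInt (fun y => (f x - f y) * K (x - y)) (a i) (b i))).
  intros i _. apply (continuous_RInt_param (fun x y => (f x - f y) * K (x - y))).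
  apply continuous_2d_Lop_integrand, Hf.
Qed.

Lemma Lop_nonneg_at_max f x0 : (forall z, continuous f z) -> (forall z, 0 < K z) ->
  (forall y, inOmega m a b y -> f y <= f x0) -> 0 <= Lop m a b K f x0.
Proof.
  intros Hf HKpos Hmax. apply sumI_nonneg. intros i Hi.
  apply RInt_ge_0; [left; apply Hab, Hi | apply ex_RInt_Lop_integrand, Hf |].
  intros y Hy. apply Rmult_le_pos; [| left; apply HKpos].
  assert (f y <= f x0) by (apply Hmax; exists i; split; assumption). lra.
Qed.

Lemma Rabs_Lop_le f x M C_K : (forall z, continuous f z) -> (forall z, 0 < K z < C_K) ->
  (forall y, inOmegaBar m a b y -> 0 <= f y <= M) -> inOmegaBar m a b x ->
  Rabs (Lop m a b K f x) <= M * C_K * Omega_length m a b.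
Proof.
  intros Hf HKb HM Hx. unfold Omega_length. rewrite Rmult_comm, <- sumI_mult_r.
  apply Rabs_sumI_le. intros i Hi.
  apply abs_RInt_le_const;
    [left; apply Hab, Hi | apply ex_RInt_Lop_integrand, Hf |].
  intros y Hy. rewrite Rabs_mult.
  assert (0 <= f y <= M) by (apply HM; exists i; split; assumption).
  pose proof (HM x Hx). pose proof (HKb (x - y)).
  apply Rmult_le_compat; try apply Rabs_pos.
  - apply Rabs_le. lra.
  - rewrite Rabs_right; lra.
Qed.

End Nonlocal.

Definition rhoR_of (A : R) (n Rr : R -> R -> R) : R -> R :=
  fun x => RInt (fun t => n x t * Rr x t) (-A) A.

Section Rho.

Variables (A : R) (n : R -> R -> R).
Hypothesis Hn : C2_xt n.

Lemma is_derive_rho x : is_derive (rho_of A n) x (RInt (fun t => dx n x t) (-A) A).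
Proof.
  apply is_derive_RInt_param_2d.
  - intros; apply C1_xt_ex_derive_x, Hn.
  - apply C1_xt_continuous_2d, Hn.
  - apply C1_xt_continuous_2d_dx, Hn.
Qed.

Lemma is_derive_Derive_rho x :
  is_derive (Derive (rho_of A n)) x (RInt (fun t => dx (dx n) x t) (-A) A).
Proof.
  apply is_derive_ext with (f := fun x => RInt (fun t => dx n x t) (-A) A).
  - intros; symmetry; apply is_derive_unique, is_derive_rho.
  - apply is_derive_RInt_param_2d.
    + intros; apply C2_xt_ex_derive_dx, Hn.
    + apply C1_xt_continuous_2d_dx, Hn.
    + apply C2_xt_continuous_2d_dxx, Hn.
Qed.

Lemma continuous_Derive_n_rho k z : (k < 3)%nat -> continuous (Derive_n (rho_of A n) k) z.
Proof.
  intros Hk. destruct k as [| [| [| k]]]; [| | | lia].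
  - apply (ex_derive_continuous (K := R_AbsRing) (V := R_NormedModule)).
    eexists; apply is_derive_rho.
  - apply (ex_derive_continuous (K := R_AbsRing) (V := R_NormedModule)).
    eexists; apply is_derive_Derive_rho.
  - apply continuous_ext with (f := fun x => RInt (fun t => dx (dx n) x t) (-A) A).
    + intros; symmetry; apply is_derive_unique, is_derive_Derive_rho.
    + apply continuous_RInt_param, C2_xt_continuous_2d_dxx, Hn.
Qed.

Variables (m : nat) (a b : nat -> R) (K : R -> R).
Hypothesis HK : forall z, continuous K z.

Lemma is_RInt_Lop_slices x :
  is_RInt (fun t => Lop m a b K (fun y => n y t) x) (-A) A (Lop m a b K (rho_of A n) x).
Proof.
  apply (is_RInt_sumI (fun i t => RInt (fun y => (n x t - n y t) * K (x - y)) (a i) (b i))).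
  intros i _.
  set (g := fun y t => (n x t - n y t) * K (x - y)).
  assert (Hg : continuous_2d g).
  { intros u v. apply continuity_2d_pt_mult.
    - apply continuity_2d_pt_minus; [| apply C1_xt_continuous_2d, Hn].
      apply (continuity_1d_2d_pt_comp (fun t => n x t) (fun (_ : R) t => t));
        [| apply continuity_2d_pt_id2].
      apply continuity_pt_filterlim, continuous_2d_slice_2, C1_xt_continuous_2d, Hn.
    - apply (continuity_1d_2d_pt_comp K (fun y (_ : R) => x - y));
        [apply continuity_pt_filterlim, HK |].
      apply continuity_2d_pt_minus; [apply continuity_2d_pt_const | apply continuity_2d_pt_id1]. }
  replace (RInt (fun y => (rho_of A n x - rho_of A n y) * K (x - y)) (a i) (b i))
    with (RInt (fun t => RInt (fun y => g y t) (a i) (b i)) (-A) A).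
  - apply (RInt_correct (V := R_CompleteNormedModule)).
    apply (ex_RInt_continuous (V := R_CompleteNormedModule)). intros.
    apply (continuous_RInt_param (fun t y => g y t)), continuous_2d_swap, Hg.
  - rewrite RInt_Fubini by exact Hg. apply RInt_ext. intros y _. unfold g, rho_of.
    transitivity (RInt (fun t => K (x - y) * n x t + (- K (x - y)) * n y t) (-A) A).
    + apply RInt_ext. intros t _. lra.
    + rewrite (RInt_lin_comb (fun t => n x t) (fun t => n y t))
        by (apply ex_RInt_slice_2, C1_xt_continuous_2d, Hn).
      lra.
Qed.

(* The [dt (dt n)] term integrates to zero by the Neumann condition in [t]. *)
Lemma rho_equation Rr eps x : continuous_2d Rr ->
  (forall x, inOmega m a b x -> dt n x (-A) = 0 /\ dt n x A = 0) ->
  (forall x t, inOmega m a b x -> -A < t < A ->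
     - eps ^ 2 * dt (dt n) x t - dx (dx n) x t + Lop m a b K (fun y => n y t) x
     = n x t * (Rr x t - rho_of A n x)) ->
  -A < A -> inOmega m a b x ->
  - Derive (Derive (rho_of A n)) x + Lop m a b K (rho_of A n) x
  = rhoR_of A n Rr x - rho_of A n x * rho_of A n x.
Proof.
  intros HRr Hneumann Heq HA Hx.
  assert (Hn0 := C1_xt_continuous_2d n (proj1 Hn)).
  assert (Hdtt : is_RInt (fun t => dt (dt n) x t) (-A) A 0).
  { replace 0 with (dt n x A - dt n x (-A)) by (destruct (Hneumann x Hx) as [-> ->]; ring).
    apply (is_RInt_derive (fun s => dt n x s)).
    - intros t _. apply Derive_correct, C2_xt_ex_derive_dt, Hn.
    - intros t _. apply continuous_2d_slice_2, C2_xt_continuous_2d_dtt, Hn. }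
  assert (Hdxx : is_RInt (fun t => dx (dx n) x t) (-A) A (Derive (Derive (rho_of A n)) x)).
  { rewrite (is_derive_unique _ _ _ (is_derive_Derive_rho x)).
    apply (RInt_correct (V := R_CompleteNormedModule)), ex_RInt_slice_2,
      C2_xt_continuous_2d_dxx, Hn. }
  assert (HnRr : is_RInt (fun t => n x t * Rr x t) (-A) A (rhoR_of A n Rr x)).
  { apply (RInt_correct (V := R_CompleteNormedModule)),
      (ex_RInt_slice_2 (fun x t => n x t * Rr x t)).
    intros u v. apply continuity_2d_pt_mult; auto. }
  assert (Hrho : is_RInt (fun t => n x t) (-A) A (rho_of A n x)).
  { apply (RInt_correct (V := R_CompleteNormedModule)), ex_RInt_slice_2, Hn0. }
  pose proof (is_RInt_lin_comb _ _ _ _ _ _ 1 1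
    (is_RInt_lin_comb _ _ _ _ _ _ (- eps ^ 2) (-1) Hdtt Hdxx) (is_RInt_Lop_slices x)) as Hlhs.
  pose proof (is_RInt_lin_comb _ _ _ _ _ _ 1 (- rho_of A n x) HnRr Hrho) as Hrhs.
  apply (is_RInt_unique (V := R_CompleteNormedModule)) in Hlhs, Hrhs. cbv beta in Hlhs.
  rewrite (RInt_ext _ (fun t => 1 * (n x t * Rr x t) + - rho_of A n x * n x t)) in Hlhs.
  - rewrite Hrhs in Hlhs. lra.
  - intros t Ht. rewrite Rmin_left, Rmax_right in Ht by lra.
    specialize (Heq x t Hx Ht). lra.
Qed.

End Rho.

Section Estimates.

Variables (A : R) (m : nat) (a b : nat -> R) (K : R -> R) (Rr : R -> R -> R)
  (C_R C_K eps : R) (n : R -> R -> R).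
Hypothesis HA : 0 < A.
Hypothesis Hm : (1 <= m)%nat.
Hypothesis Hab : forall i, (i < m)%nat -> a i < b i.
Hypothesis HRr : C1_xt Rr.
Hypothesis HRb : forall x t, inOmegaBar m a b x -> -A <= t <= A -> Rabs (Rr x t) < C_R.
Hypothesis HK : forall z, continuous K z.
Hypothesis HKb : forall z, 0 < K z < C_K.
Hypothesis Hsol : solE m a b K Rr A eps n.

Local Notation rho := (rho_of A n).

Lemma C_R_pos : 0 < C_R.
Proof.
  assert (Ha0 : inOmegaBar m a b (a 0%nat)).
  { exists 0%nat. split; [lia |]. pose proof (Hab 0%nat ltac:(lia)). lra. }
  pose proof (HRb (a 0%nat) 0 Ha0 ltac:(lra)). pose proof (Rabs_pos (Rr (a 0%nat) 0)). lra.
Qed.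

Lemma sol_C2_xt : C2_xt n.
Proof. apply Hsol. Qed.

Lemma continuous_rho z : continuous rho z.
Proof. exact (continuous_Derive_n_rho A n sol_C2_xt 0 z ltac:(lia)). Qed.

Lemma continuous_2d_n_Rr : continuous_2d (fun x t => n x t * Rr x t).
Proof.
  intros u v. apply continuity_2d_pt_mult.
  - apply C1_xt_continuous_2d, sol_C2_xt.
  - apply C1_xt_continuous_2d, HRr.
Qed.

Lemma rho_equation_closure x : inOmegaBar m a b x ->
  - Derive (Derive rho) x + Lop m a b K rho x = rhoR_of A n Rr x - rho x * rho x.
Proof.
  intros Hx. destruct Hsol as (_ & _ & _ & _ & Hneumann & Hpde).
  set (lhs := fun x => - Derive (Derive rho) x + Lop m a b K rho x).
  set (rhs := fun x => rhoR_of A n Rr x - rho x * rho x).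
  assert (Hlhs : forall z, continuous lhs z).
  { intros z. apply (continuous_plus (fun x => - Derive (Derive rho) x) (Lop m a b K rho)).
    - apply (continuous_opp (Derive (Derive rho))).
      exact (continuous_Derive_n_rho A n sol_C2_xt 2 z ltac:(lia)).
    - apply continuous_Lop; [exact HK | exact continuous_rho]. }
  assert (Hrhs : forall z, continuous rhs z).
  { intros z. apply (continuous_minus (rhoR_of A n Rr) (fun x => rho x * rho x)).
    - apply (continuous_RInt_param (fun x t => n x t * Rr x t)), continuous_2d_n_Rr.
    - apply (continuous_mult rho rho); apply continuous_rho. }
  assert (Heq : forall y, inOmega m a b y -> lhs y = rhs y).
  { intros y Hy. apply (rho_equation A n sol_C2_xt m a b K HK Rr eps y);
      [apply C1_xt_continuous_2d, HRr | exact Hneumann | exact Hpde | lra | exact Hy]. }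
  change (lhs x = rhs x).
  apply Rle_antisym; apply (continuous_le_closure m a b Hab _ _ x Hx);
    [apply Hlhs | apply Hrhs | | apply Hrhs | apply Hlhs |];
    intros y Hy; rewrite (Heq y Hy); lra.
Qed.

Lemma n_nonneg_closure x t : inOmegaBar m a b x -> -A < t < A -> 0 <= n x t.
Proof.
  intros Hx Ht. destruct Hsol as (_ & Hpos & _).
  apply (continuous_le_closure m a b Hab (fun _ => 0) (fun y => n y t) x Hx).
  - apply continuous_const.
  - apply continuous_2d_slice_1, C1_xt_continuous_2d, sol_C2_xt.
  - intros y Hy. left. apply Hpos; assumption.
Qed.

Lemma rho_nonneg_closure x : inOmegaBar m a b x -> 0 <= rho x.
Proof.
  intros Hx. apply RInt_ge_0; [lra | apply ex_RInt_slice_2, C1_xt_continuous_2d, sol_C2_xt |].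
  intros t Ht. apply n_nonneg_closure; assumption.
Qed.

Lemma Rabs_rhoR_le x : inOmegaBar m a b x -> Rabs (rhoR_of A n Rr x) <= C_R * rho x.
Proof.
  intros Hx.
  assert (Hslice : forall t, continuous (fun t => n x t * Rr x t) t)
    by (intros t; apply (continuous_2d_slice_2 (fun x t => n x t * Rr x t)), continuous_2d_n_Rr).
  assert (Hscal : RInt (fun t => C_R * n x t) (-A) A = C_R * rho x).
  { exact (RInt_scal (V := R_CompleteNormedModule) (fun t => n x t) (-A) A C_R
             (ex_RInt_slice_2 n x (-A) A (C1_xt_continuous_2d n (proj1 sol_C2_xt)))). }
  apply Rle_trans with (RInt (fun t => Rabs (n x t * Rr x t)) (-A) A).
  - apply abs_RInt_le; [lra |]. apply (ex_RInt_continuous (V := R_CompleteNormedModule)).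
    intros; apply Hslice.
  - rewrite <- Hscal. apply RInt_le; [lra | | |].
    + apply (ex_RInt_continuous (V := R_CompleteNormedModule)).
      intros; apply (continuous_Rabs_comp (fun t => n x t * Rr x t)), Hslice.
    + apply (ex_RInt_slice_2 (fun x t => C_R * n x t)). intros u v.
      apply continuity_2d_pt_mult;
        [apply continuity_2d_pt_const | apply C1_xt_continuous_2d, sol_C2_xt].
    + intros t Ht. pose proof (n_nonneg_closure x t Hx Ht).
      pose proof (HRb x t Hx ltac:(lra)).
      rewrite Rabs_mult, (Rabs_right (n x t)), Rmult_comm by lra.
      apply Rmult_le_compat_r; lra.
Qed.

Lemma Derive_rho_neumann i : (i < m)%nat -> Derive rho (a i) = 0 /\ Derive rho (b i) = 0.
Proof.
  intros Hi. destruct Hsol as (_ & _ & _ & Hneumann & _).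
  assert (Hzero : forall x, (forall t, -A < t < A -> dx n x t = 0) -> Derive rho x = 0).
  { intros x Hdx. rewrite (is_derive_unique _ _ _ (is_derive_rho A n sol_C2_xt x)).
    rewrite (RInt_ext _ (fun _ => 0)), (RInt_const (V := R_CompleteNormedModule)).
    - apply Rmult_0_r.
    - intros t Ht. rewrite Rmin_left, Rmax_right in Ht by lra. apply Hdx, Ht. }
  split; apply Hzero; intros t Ht;
    [exact (proj1 (Hneumann i t Hi Ht)) | exact (proj2 (Hneumann i t Hi Ht))].
Qed.

Lemma Derive_rho_at_max x0 : inOmegaBar m a b x0 ->
  (forall y, inOmegaBar m a b y -> rho y <= rho x0) -> Derive rho x0 = 0.
Proof.
  intros [i [Hi Hx0]] Hmax.
  destruct (Req_dec x0 (a i)) as [-> | Ha]; [exact (proj1 (Derive_rho_neumann i Hi)) |].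
  destruct (Req_dec x0 (b i)) as [-> | Hb]; [exact (proj2 (Derive_rho_neumann i Hi)) |].
  apply (Derive_eq_0_at_max rho (a i) (b i)); [lra | eexists; apply is_derive_rho, sol_C2_xt |].
  intros y Hy. apply Hmax. exists i. split; [exact Hi | lra].
Qed.

Lemma rho_le_C_R x : inOmegaBar m a b x -> rho x <= C_R.
Proof.
  intros Hx.
  destruct (continuous_max_Omega_closure rho m a b Hm Hab continuous_rho) as [x0 [Hx0 Hmax]].
  assert (Hconcave : Derive (Derive rho) x0 <= 0).
  { destruct Hx0 as [i [Hi Hx0i]].
    apply (Derive_2_nonpos_at_max rho (a i) (b i) x0 (Hab i Hi) Hx0i).
    - intros y. eexists; apply is_derive_rho, sol_C2_xt.
    - eexists; apply is_derive_Derive_rho, sol_C2_xt.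
    - apply Derive_rho_at_max; [exists i; split; assumption | exact Hmax].
    - intros y Hy. apply Hmax. exists i. split; assumption. }
  assert (HL : 0 <= Lop m a b K rho x0).
  { apply (Lop_nonneg_at_max m a b K Hab HK rho x0 continuous_rho (fun z => proj1 (HKb z))).
    intros y Hy. apply Hmax, inOmega_inOmegaBar, Hy. }
  pose proof (rho_equation_closure x0 Hx0) as Heq.
  pose proof (Rle_abs (rhoR_of A n Rr x0)). pose proof (Rabs_rhoR_le x0 Hx0).
  pose proof (rho_nonneg_closure x0 Hx0). pose proof (Hmax x Hx). pose proof C_R_pos.
  assert (rho x0 * rho x0 <= C_R * rho x0) by lra.
  nra.
Qed.

Definition rho_D2_bound : R := C_R * C_K * Omega_length m a b + 2 * (C_R * C_R).

Lemma rho_D2_bound_nonneg : 0 <= rho_D2_bound.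
Proof.
  pose proof C_R_pos. pose proof (HKb 0). pose proof (Omega_length_nonneg m a b Hab).
  unfold rho_D2_bound.
  assert (0 <= C_R * C_K * Omega_length m a b) by (apply Rmult_le_pos; [apply Rmult_le_pos |]; lra).
  nra.
Qed.

Lemma Rabs_Derive_2_rho_le x : inOmegaBar m a b x -> Rabs (Derive (Derive rho) x) <= rho_D2_bound.
Proof.
  intros Hx.
  assert (Hrange : forall y, inOmegaBar m a b y -> 0 <= rho y <= C_R)
    by (intros y Hy; split; [apply rho_nonneg_closure | apply rho_le_C_R]; exact Hy).
  pose proof (Rabs_Lop_le m a b K Hab HK rho x C_R C_K continuous_rho HKb Hrange Hx) as HL.
  pose proof (rho_equation_closure x Hx) as Heq.
  pose proof (Rabs_rhoR_le x Hx) as HR. pose proof (Hrange x Hx) as Hx'.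
  apply Rabs_le_between in HL. apply Rabs_le_between in HR.
  assert (C_R * rho x <= C_R * C_R) by (apply Rmult_le_compat_l; [pose proof C_R_pos |]; lra).
  assert (0 <= rho x * rho x <= C_R * C_R) by (split; [| apply Rmult_le_compat]; nra).
  unfold rho_D2_bound. apply Rabs_le_between. lra.
Qed.

Lemma Rabs_Derive_rho_le x : inOmegaBar m a b x ->
  Rabs (Derive rho x) <= rho_D2_bound * Omega_length m a b.
Proof.
  intros [i [Hi Hx]].
  destruct (MVT_gen (Derive rho) (a i) x (Derive (Derive rho))) as [c [Hc Hmvt]].
  - intros y _. apply Derive_correct. eexists; apply is_derive_Derive_rho, sol_C2_xt.
  - intros y _. apply continuity_pt_filterlim.
    exact (continuous_Derive_n_rho A n sol_C2_xt 1 y ltac:(lia)).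
  - rewrite Rmin_left, Rmax_right in Hc by lra.
    rewrite (proj1 (Derive_rho_neumann i Hi)), Rminus_0_r in Hmvt. rewrite Hmvt.
    rewrite Rabs_mult, (Rabs_right (x - a i)) by lra.
    apply Rmult_le_compat; [apply Rabs_pos | lra | |].
    + apply Rabs_Derive_2_rho_le. exists i. split; [exact Hi | lra].
    + pose proof (interval_length_le_Omega_length m a b Hab i Hi). lra.
Qed.

Definition rho_derivatives_bound : R := C_R + (1 + Omega_length m a b) * rho_D2_bound.

Lemma rho_derivatives_bound_nonneg : 0 <= rho_derivatives_bound.
Proof.
  pose proof C_R_pos. pose proof rho_D2_bound_nonneg. pose proof (Omega_length_nonneg m a b Hab).
  unfold rho_derivatives_bound. nra.
Qed.

Lemma Rabs_Derive_n_rho_le k x : (k < 3)%nat -> inOmega m a b x ->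
  Rabs (Derive_n rho k x) <= rho_derivatives_bound.
Proof.
  intros Hk Hx. apply inOmega_inOmegaBar in Hx.
  pose proof C_R_pos. pose proof rho_D2_bound_nonneg. pose proof (Omega_length_nonneg m a b Hab).
  unfold rho_derivatives_bound.
  destruct k as [| [| [| k]]]; [| | | lia].
  - pose proof (rho_nonneg_closure x Hx). pose proof (rho_le_C_R x Hx).
    change (Rabs (rho x) <= C_R + (1 + Omega_length m a b) * rho_D2_bound).
    rewrite Rabs_right by lra. nra.
  - pose proof (Rabs_Derive_rho_le x Hx).
    change (Rabs (Derive rho x) <= C_R + (1 + Omega_length m a b) * rho_D2_bound). nra.
  - pose proof (Rabs_Derive_2_rho_le x Hx).
    change (Rabs (Derive (Derive rho) x) <= C_R + (1 + Omega_length m a b) * rho_D2_bound).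
    nra.
Qed.

End Estimates.

Theorem lemma3
  (A : R) (HA : 0 < A)
  (m : nat) (a b : nat -> R) (Hm : (1 <= m)%nat)
  (Hab : forall i, (i < m)%nat -> a i < b i)
  (Hba : forall i, (S i < m)%nat -> b i < a (S i))
  (Rr : R -> R -> R) (C_R : R)
  (HRC1 : C1_xt Rr)
  (HRbd : forall x t, inOmegaBar m a b x -> -A <= t <= A ->
            Rabs (Rr x t) < C_R /\ Rabs (dx Rr x t) < C_R /\ Rabs (dt Rr x t) < C_R)
  (K : R -> R) (c_K C_K : R)
  (HKC1 : C1_1d K) (HKeven : forall x, K (- x) = K x)
  (HcK : 0 < c_K)
  (HKbd : forall x, c_K < K x < C_K /\ Rabs (Derive K x) < C_K)
  (theta0 lam0 : R) (Htheta0 : -A < theta0 < A)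
  (Hlam0 : principal_eig1 m a b K Rr theta0 0 lam0)
  (Hmin : forall theta lam, -A < theta < A ->
            principal_eig1 m a b K Rr theta 0 lam -> lam0 <= lam)
  (Hneg : lam0 < 0)
  (eps0 : R) (Heps0 : 0 < eps0)
  (Hmu : forall eps mu, 0 < eps < eps0 ->
           principal_eig2 m a b K Rr A eps mu -> mu < lam0 / 2) :
  (forall eps n, 0 < eps < eps0 -> solE m a b K Rr A eps n ->
     forall x, inOmega m a b x -> 0 <= rho_of A n x <= C_R) /\
  (forall p : Rbar, Rbar_le (Finite 1) p ->
     exists C, 0 < C /\ exists eps1, 0 < eps1 /\
       forall eps n, 0 < eps < eps1 -> eps < eps0 -> solE m a b K Rr A eps n ->
         Rbar_le (W2p_norm m a b p (rho_of A n)) (Finite C)).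
Proof.
  assert (HRb : forall x t, inOmegaBar m a b x -> -A <= t <= A -> Rabs (Rr x t) < C_R)
    by (intros x t Hx Ht; apply (HRbd x t Hx Ht)).
  assert (HK : forall z, continuous K z)
    by (intros z; apply (ex_derive_continuous (K := R_AbsRing) (V := R_NormedModule)), HKC1).
  assert (HKb : forall z, 0 < K z < C_K) by (intros z; destruct (HKbd z) as [[? ?] _]; lra).
  split.
  - intros eps n _ Hsol x Hx. apply inOmega_inOmegaBar in Hx. split.
    + exact (rho_nonneg_closure A m a b K Rr eps n HA Hab Hsol x Hx).
    + exact (rho_le_C_R A m a b K Rr C_R C_K eps n HA Hm Hab HRC1 HRb HK HKb Hsol x Hx).
  - intros p Hp.
    destruct (W2p_norm_le m a b Hab p _ Hp
                (rho_derivatives_bound_nonneg A m a b K Rr C_R C_K HA Hm Hab HRb HKb))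
      as [C [HC Hnorm]].
    exists C. split; [exact HC |]. exists eps0. split; [exact Heps0 |].
    intros eps n _ _ Hsol. apply Hnorm.
    + intros k Hk z. exact (continuous_Derive_n_rho A n (proj1 Hsol) k z Hk).
    + exact (Rabs_Derive_n_rho_le A m a b K Rr C_R C_K eps n HA Hm Hab HRC1 HRb HK HKb Hsol).
Qed.
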